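(* Let $S$ be a finite nonempty set of positive integers, and fix integers $a,b,t\ge 1$ and $c\ge 0$. Let $X$ be a periodic independent set of $G(S)$, with blocks $(B_i)_{i\in\mathbb{Z}}$ and $t$-frames $(F_j)_{j\in\mathbb{Z}}$. Define the charge $\mu(B_i)=a|B_i|-b$. Let $d$ be an $S$-local discharging rule on blocks, defining $\mu^*(B_i)=\mu(B_i)+\sum_{j}d(B_j,B_i)$. Define $\nu^*(F_j)=\sum_{B_i\in F_j}\mu^*(B_i)$ for each $t$-frame $F_j$, and let $d'$ be an $S$-local discharging rule on $t$-frames, defining $\nu'(F_j)=\nu^*(F_j)+\sum_{i}d'(F_i,F_j)$. If $\nu'(F_j)\ge c$ for all $j$, then $\delta(X)\le\frac{at}{bt+c}$.
   Context: The distance graph $G(S)$ has vertex set $\mathbb{Z}$, $i,j$ adjacent iff $|i-j|\in S$; the density of $X\subseteq\mathbb{Z}$ is $\delta(X)=\limsup_{N\to\infty}\frac{|X\cap[-N,N]|}{2N+1}$; $X$ is periodic if $X+p=X$ for some $p\ge1$. For an independent set $X=\{\dots<x_{-1}<x_0<x_1<\dots\}$ indexed by $\mathbb{Z}$ in increasing order, the $i$-th block is $B_i=\{x_i,x_i+1,\dots,x_{i+1}-1\}$ (so $|B_i|=x_{i+1}-x_i$); the block structure of a sequence of consecutive blocks is the list of their sizes in order. A $t$-frame is $F_j=\{B_j,\dots,B_{j+t-1}\}$. A discharging rule on blocks is a function $d$ from ordered pairs of blocks to $\mathbb{Z}$ with $d(B_i,B_j)=-d(B_j,B_i)$; it is $S$-local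 if there is $m=m(S)$ such that $d(B_i,B_j)=0$ whenever $|x_i-x_j|>m$, and when $|x_i-x_j|\le m$, $d(B_i,B_j)$ depends only on the block structure of $B_{i-m},\dots,B_{i+m}$. A discharging rule on frames is a function $d'$ from ordered pairs of $t$-frames to $\mathbb{Z}$ with $d'(F_i,F_j)=-d'(F_j,F_i)$; it is $S$-local if there is $m'=m'(S)$ such that $d'(F_i,F_j)=0$ whenever $|i-j|>m'$, and when $|i-j|\le m'$, $d'(F_i,F_j)$ depends only on the block structure of the frames $F_{i-m'},\dots,F_{i+m'}$. *)

From mathcomp Require Import all_boot all_order all_algebra.
From mathcomp Require Import all_classical all_reals all_analysis.
Set Implicit Arguments. Unset Strict Implicit. Unset Printing Implicit Defensive.
Import Order.TTheory GRing.Theory Num.Theory.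
Local Open Scope ring_scope.

Definition independent (S : seq nat) (X : int -> bool) : Prop :=
  forall u v : int, X u -> X v -> (absz (u - v) \notin S).

Definition periodic_set (X : int -> bool) : Prop :=
  exists p : nat, (0 < p)%N /\ forall n : int, X (n + p%:Z) = X n.

Definition enumerates (X : int -> bool) (x : int -> int) : Prop :=
  (forall i : int, x i < x (i + 1)) /\ (forall n : int, X n <-> exists i, x i = n).

(* |B_i| = x_{i+1} - x_i *)
Definition bsize (x : int -> int) (i : int) : int := x (i + 1) - x i.

(* block structure of B_{i-m}, ..., B_{i+m} *)
Definition bwindow (x : int -> int) (m : nat) (i : int) : seq int :=
  [seq bsize x (i - m%:Z + k%:Z) | k <- iota 0 (2 * m).+1].

(* block structure of the t-frame F_j = {B_j, ..., B_{j+t-1}} *)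
Definition fstruct (x : int -> int) (t : nat) (j : int) : seq int :=
  [seq bsize x (j + l%:Z) | l <- iota 0 t].

Definition fwindow (x : int -> int) (t m : nat) (i : int) : seq (seq int) :=
  [seq fstruct x t (i - m%:Z + k%:Z) | k <- iota 0 (2 * m).+1].

(* d : discharging rule on blocks, d i j = d(B_i, B_j) *)
Definition block_rule_local (x : int -> int) (d : int -> int -> int) (m : nat) : Prop :=
  (forall i j, d i j = - d j i) /\
  exists D : seq int -> int -> int,
    forall i j,
      ((m%:Z < `|x i - x j|) -> d i j = 0) /\
      ((`|x i - x j| <= m%:Z) -> d i j = D (bwindow x m i) (j - i)).

Definition frame_rule_local (x : int -> int) (t : nat) (d' : int -> int -> int) (m : nat)
  : Prop :=
  (forall i j, d' i j = - d' j i) /\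
  exists D : seq (seq int) -> int -> int,
    forall i j,
      ((m%:Z < `|i - j|) -> d' i j = 0) /\
      ((`|i - j| <= m%:Z) -> d' i j = D (fwindow x t m i) (j - i)).

Definition isum (lo hi : int) (f : int -> int) : int :=
  \sum_(k < absz (hi - lo + 1)) f (lo + k%:Z).

Definition mu (a b : nat) (x : int -> int) (i : int) : int :=
  a%:Z * bsize x i - b%:Z.

(* mu*(B_i) = mu(B_i) + sum_j d(B_j, B_i); only j with |j - i| <= m can
   contribute, since d(B_j,B_i) = 0 when |x_j - x_i| > m and |x_j - x_i| >= |j - i| *)
Definition mustar (a b : nat) (x : int -> int) (d : int -> int -> int) (m : nat)
  (i : int) : int :=
  mu a b x i + isum (i - m%:Z) (i + m%:Z) (fun j => d j i).

Definition nustar (a b t : nat) (x : int -> int) (d : int -> int -> int) (m : nat)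
  (j : int) : int :=
  \sum_(l < t) mustar a b x d m (j + l%:Z).

(* nu'(F_j) = nu*(F_j) + sum_i d'(F_i, F_j); only |i - j| <= m' contribute *)
Definition nuprime (a b t : nat) (x : int -> int) (d : int -> int -> int) (m : nat)
  (d' : int -> int -> int) (m' : nat) (j : int) : int :=
  nustar a b t x d m j + isum (j - m'%:Z) (j + m'%:Z) (fun i => d' i j).

Definition countX (X : int -> bool) (N : nat) : nat :=
  (\sum_(k < (2 * N).+1) nat_of_bool (X ((Posz (nat_of_ord k) - Posz N)%R)))%N.

Definition density (R : realType) (X : int -> bool) : \bar R :=
  limn_esup (fun N : nat => ((countX X N)%:R / ((2 * N).+1)%:R : R)%:E).

From mathcomp Require Import all_boot all_order all_algebra.
From mathcomp Require Import all_classical all_reals all_analysis.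
From mathcomp Require Import zify lra.
Set Implicit Arguments. Unset Strict Implicit. Unset Printing Implicit Defensive.
Import Order.TTheory GRing.Theory Num.Theory.
Local Open Scope ring_scope.

(* Since X is periodic with some period p, its increasing enumeration satisfies
   x (i + n) = x i + p for some n > 0.  Hence X has at most about n/p of the
   points of any long interval, so delta(X) <= n / p, and every quantity built
   from the block structure, in particular both discharging rules, is
   n-periodic in the indices.  Over one period an antisymmetric periodic rule
   moves no charge, so the frame charges nu' of F_0, ..., F_(n-1) add up to t
   times the block charges mu of B_0, ..., B_(n-1), that is to t (a p - b n).
   Each nu' being at least c, we get c n <= t (a p - b n), which is
   n / p <= a t / (b t + c). *)

Lemma int_ind_step (P : int -> Prop) :
  P 0 -> (forall s, P s -> P (s + 1)) -> (forall s, P s -> P (s - 1)) ->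
  forall s, P s.
Proof.
move=> P0 PS PP; elim/int_rect=> [//|n /PS|n /PP].
- by have -> : n%:Z + 1 = n.+1%:Z by lia.
- by have -> : - n%:Z - 1 = - n.+1%:Z by lia.
Qed.

Section IncreasingSequence.
Variable x : int -> int.
Hypothesis x_incr : forall i, x i < x (i + 1).

Lemma incr_addn i (k : nat) : x i + k%:Z <= x (i + k%:Z).
Proof.
elim: k => [|k IHk]; first by rewrite !addr0.
have := x_incr (i + k%:Z); have -> : i + k.+1%:Z = i + k%:Z + 1 by lia.
lia.
Qed.

Lemma incr_homo : {homo x : i j / i < j}.
Proof.
move=> i j ij; have := incr_addn i (absz (j - i)).
have -> : i + (absz (j - i))%:Z = j by lia.
lia.
Qed.

Lemma incr_leE : {mono x : i j / i <= j}.
Proof. exact: le_mono incr_homo. Qed.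

Lemma incr_ltE : {mono x : i j / i < j}.
Proof. exact: leW_mono incr_leE. Qed.

Lemma incr_inj : injective x.
Proof. exact: inc_inj incr_leE. Qed.

End IncreasingSequence.

Section TwoEnumerations.
Variables (X : int -> bool) (x y : int -> int).
Hypotheses (Ex : enumerates X x) (Ey : enumerates X y).

Lemma enumerates_succ i j : x i = y j -> x (i + 1) = y (j + 1).
Proof.
case: Ex Ey => [x_incr Xx] [y_incr Xy] xy.
have [s ys] : exists s, y s = x (i + 1) by apply/Xy/Xx; exists (i + 1).
have [r xr] : exists r, x r = y (j + 1) by apply/Xx/Xy; exists (j + 1).
have js : j < s by rewrite -(incr_ltE y_incr) ys -xy x_incr.
have ir : i < r by rewrite -(incr_ltE x_incr) xr xy y_incr.
apply: le_anti; apply/andP; split.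
- by rewrite -xr incr_leE //; lia.
- by rewrite -ys incr_leE //; lia.
Qed.

Lemma enumerates_pred i j : x i = y j -> x (i - 1) = y (j - 1).
Proof.
case: Ex Ey => [x_incr Xx] [y_incr Xy] xy.
have [s xs] : exists s, x s = y (j - 1) by apply/Xx/Xy; exists (j - 1).
have : x (s + 1) = x i by rewrite (enumerates_succ xs) subrK.
by move/(incr_inj x_incr) <-; rewrite addrK.
Qed.

Lemma enumerates_shift i j : x i = y j -> forall k, x (i + k) = y (j + k).
Proof.
move=> xy; elim/int_ind_step => [|k|k]; first by rewrite !addr0.
- by move/enumerates_succ; rewrite !addrA.
- by move/enumerates_pred; rewrite !addrA.
Qed.

End TwoEnumerations.

Lemma enumerates_index_period (X : int -> bool) (x : int -> int) (p : nat) :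
  enumerates X x -> (0 < p)%N -> (forall k, X (k + p%:Z) = X k) ->
  exists2 n : nat, (0 < n)%N & forall i, x (i + n%:Z) = x i + p%:Z.
Proof.
move=> Ex p_gt0 Xp; have [x_incr Xx] := Ex.
have Ey : enumerates X (fun i => x i + p%:Z).
  split=> [i|k]; first by rewrite ltrD2r.
  rewrite -(subrK p%:Z k) Xp Xx; split=> -[i xi]; exists i; lia.
have [n0 xn0] : exists n0, x n0 = x 0 + p%:Z by apply/Xx; rewrite Xp Xx; exists 0.
have n0_gt0 : 0 < n0 by rewrite -(incr_ltE x_incr) xn0 ltrDl ltz_nat.
exists (absz n0); first by lia.
by move=> i; rewrite gez0_abs ?(ltW n0_gt0) // addrC (enumerates_shift Ex Ey xn0) add0r.
Qed.

Lemma sum_periodic_shift (V : nmodType) (f : int -> V) (n : nat) :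
  (forall i, f (i + n%:Z) = f i) ->
  forall s, \sum_(k < n) f (s + k%:Z) = \sum_(k < n) f k%:Z.
Proof.
move=> f_per.
have shift1 s : \sum_(k < n) f (s + 1 + k%:Z) = \sum_(k < n) f (s + k%:Z).
  case: n f_per => [|n] f_per; first by rewrite !big_ord0.
  rewrite big_ord_recr big_ord_recl /= addr0 addrC.
  have -> : s + 1 + n%:Z = s + n.+1%:Z by lia.
  rewrite f_per; congr (_ + _); apply: eq_bigr => k _.
  by congr f; rewrite /bump /=; lia.
elim/int_ind_step => [|s <-|s <-]; last by rewrite -shift1 subrK.
- by apply: eq_bigr => k _; rewrite add0r.
- by rewrite shift1.
Qed.

Lemma isum_window (f : int -> int) (i : int) (m : nat) :
  isum (i - m%:Z) (i + m%:Z) f = \sum_(k < (2 * m).+1) f (i - m%:Z + k%:Z).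
Proof. by rewrite /isum; have -> : absz (i + m%:Z - (i - m%:Z) + 1) = (2 * m).+1 by lia. Qed.

Section PeriodicAntisymmetricRule.
Variables (g : int -> int -> int) (n : nat).
Hypothesis g_antisym : forall i j, g i j = - g j i.
Hypothesis g_periodic : forall i j, g (i + n%:Z) (j + n%:Z) = g i j.

Lemma periodic_flux_opp (l : int) :
  \sum_(j < n) g (j%:Z - l) j%:Z = - \sum_(j < n) g (j%:Z + l) j%:Z.
Proof.
have h_per i : g (i + n%:Z + l) (i + n%:Z) = g (i + l) i.
  by rewrite -(g_periodic (i + l)); congr g; lia.
rewrite -(@sum_periodic_shift _ (fun i => g (i + l) i) n h_per (- l)) -sumrN.
by apply: eq_bigr => j _; rewrite g_antisym; congr (- g _ _); lia.
Qed.

Lemma periodic_window_flux_eq0 (m : nat) :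
  \sum_(j < n) isum (j%:Z - m%:Z) (j%:Z + m%:Z) (fun i => g i j%:Z) = 0.
Proof.
under eq_bigr do rewrite isum_window.
rewrite exchange_big /=.
pose F (k : nat) := \sum_(j < n) g (j%:Z + (k%:Z - m%:Z)) j%:Z.
have -> : \sum_(k < (2 * m).+1) \sum_(j < n) g (j%:Z - m%:Z + k%:Z) j%:Z
    = \sum_(k < (2 * m).+1) F k.
  by apply: eq_bigr => k _; apply: eq_bigr => j _; rewrite addrA addrAC.
(* the flux at offset k - m cancels the flux at offset m - k *)
have F_rev (k : 'I_(2 * m).+1) : F (rev_ord k) = - F k.
  rewrite /F -periodic_flux_opp; apply: eq_bigr => j _.
  by congr g; have := ltn_ord k; rewrite /=; lia.
have : (\sum_(k < (2 * m).+1) F k) *+ 2 = 0.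
  by rewrite mulr2n {1}(reindex_inj rev_ord_inj) /= (eq_bigr _ (fun k _ => F_rev k)) sumrN addNr.
by move/eqP; rewrite mulrn_eq0 => /eqP.
Qed.

Lemma periodic_discharge_sum (f : int -> int) (m : nat) :
  \sum_(j < n) (f j%:Z + isum (j%:Z - m%:Z) (j%:Z + m%:Z) (fun i => g i j%:Z))
  = \sum_(j < n) f j%:Z.
Proof. by rewrite big_split /= periodic_window_flux_eq0 addr0. Qed.

End PeriodicAntisymmetricRule.

Section QuasiPeriodicEnumeration.
Variables (x : int -> int) (n p : nat).
Hypothesis x_qper : forall i, x (i + n%:Z) = x i + p%:Z.

Lemma bsize_periodic i : bsize x (i + n%:Z) = bsize x i.
Proof. by rewrite /bsize addrAC !x_qper opprD addrACA subrr addr0. Qed.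

Lemma bwindow_periodic m i : bwindow x m (i + n%:Z) = bwindow x m i.
Proof. by apply: eq_map => k; rewrite -(bsize_periodic (i - m%:Z + k%:Z)); congr bsize; lia. Qed.

Lemma fstruct_periodic t i : fstruct x t (i + n%:Z) = fstruct x t i.
Proof. by apply: eq_map => k; rewrite -(bsize_periodic (i + k%:Z)); congr bsize; lia. Qed.

Lemma fwindow_periodic t m i : fwindow x t m (i + n%:Z) = fwindow x t m i.
Proof.
by apply: eq_map => k; rewrite -(fstruct_periodic t (i - m%:Z + k%:Z)); congr fstruct; lia.
Qed.

Lemma block_rule_periodic d m : block_rule_local x d m ->
  forall i j, d (i + n%:Z) (j + n%:Z) = d i j.
Proof.
case=> _ [D dD] i j; have [far near] := dD i j; have [far' near'] := dD (i + n%:Z) (j + n%:Z).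
rewrite !x_qper opprD addrACA subrr addr0 in far' near'.
case: (ltrP m%:Z `|x i - x j|) => ij; first by rewrite far // far'.
by rewrite near // near' // bwindow_periodic; congr D; lia.
Qed.

Lemma frame_rule_periodic t d' m' : frame_rule_local x t d' m' ->
  forall i j, d' (i + n%:Z) (j + n%:Z) = d' i j.
Proof.
case=> _ [D dD] i j; have [far near] := dD i j; have [far' near'] := dD (i + n%:Z) (j + n%:Z).
rewrite opprD addrACA subrr addr0 in far' near'.
case: (ltrP m'%:Z `|i - j|) => ij; first by rewrite far // far'.
by rewrite near // near' // fwindow_periodic; congr D; lia.
Qed.

Lemma mustar_periodic a b d m : block_rule_local x d m ->
  forall i, mustar a b x d m (i + n%:Z) = mustar a b x d m i.
Proof.
move=> /block_rule_periodic d_per i; rewrite /mustar /mu bsize_periodic !isum_window.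
by congr (_ + _); apply: eq_bigr => k _; rewrite -(d_per _ i); congr d; lia.
Qed.

Lemma sum_mu a b : \sum_(j < n) mu a b x j%:Z = a%:Z * p%:Z - b%:Z * n%:Z.
Proof.
rewrite sumrB -mulr_sumr sumr_const card_ord -mulr_natr natz mulrC.
have -> : \sum_(j < n) bsize x j%:Z = \sum_(0 <= j < n) (x j.+1%:Z - x j%:Z).
  by rewrite big_mkord; apply: eq_bigr => j _; rewrite /bsize -addn1 PoszD.
rewrite telescope_sumr //; have := x_qper 0; rewrite !add0r => ->.
by rewrite addrAC subrr add0r mulrC.
Qed.

Lemma sum_mustar a b d m : block_rule_local x d m ->
  \sum_(j < n) mustar a b x d m j%:Z = a%:Z * p%:Z - b%:Z * n%:Z.
Proof.
move=> d_loc; rewrite /mustar periodic_discharge_sum ?sum_mu //.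
- by case: d_loc.
- exact: block_rule_periodic d_loc.
Qed.

Lemma sum_nuprime a b t d m d' m' :
  block_rule_local x d m -> frame_rule_local x t d' m' ->
  \sum_(j < n) nuprime a b t x d m d' m' j%:Z = t%:Z * (a%:Z * p%:Z - b%:Z * n%:Z).
Proof.
move=> d_loc d'_loc; rewrite /nuprime periodic_discharge_sum; last 2 first.
- by case: d'_loc.
- exact: frame_rule_periodic d'_loc.
rewrite /nustar exchange_big /= -(sum_mustar a b d_loc) -natz mulr_natl.
rewrite -[in RHS](card_ord t) -sumr_const.
apply: eq_bigr => l _; rewrite -(sum_periodic_shift (mustar_periodic a b d_loc) l).
by apply: eq_bigr => j _; rewrite addrC.
Qed.

Lemma period_charge_bound a b t c d m d' m' :
  block_rule_local x d m -> frame_rule_local x t d' m' ->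
  (forall j, c%:Z <= nuprime a b t x d m d' m' j) ->
  (n * (b * t + c) <= a * t * p)%N.
Proof.
move=> d_loc d'_loc nu_ge.
have : \sum_(j < n) c%:Z <= \sum_(j < n) nuprime a b t x d m d' m' j%:Z.
  by apply: ler_sum => j _; apply: nu_ge.
rewrite sum_nuprime // sumr_const card_ord; lia.
Qed.

End QuasiPeriodicEnumeration.

Lemma periodic_addMz (T : Type) (f : int -> T) (n : int) :
  (forall i, f (i + n) = f i) -> forall k i, f (i + k * n) = f i.
Proof.
move=> f_per; elim/int_ind_step => [|k IHk|k IHk] i; first by rewrite mul0r addr0.
- by rewrite mulrDl mul1r addrA f_per.
- by rewrite -(IHk i) -(f_per (i + (k - 1) * n)); congr f; lia.
Qed.

Lemma countX_le_index_range (X : int -> bool) (x : int -> int) (N L : nat) :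
  enumerates X x -> (forall i, `|x i| <= N%:Z -> `|i| <= L%:Z) ->
  (countX X N <= (2 * L).+1)%N.
Proof.
move=> [_ Xx] index_le.
have -> : countX X N = #|[set k : 'I_(2 * N).+1 | X (k%:Z - N%:Z)]|.
  by rewrite /countX -sum1dep_card [RHS]big_mkcond; apply: eq_bigr => k _; case: (X _).
(* g sends the index j - L to the position of x (j - L) in [-N, N]; every
   element of X in [-N, N] is hit, by the index bound. *)
pose g (j : 'I_(2 * L).+1) : 'I_(2 * N).+1 := inord (absz (x (j%:Z - L%:Z) + N%:Z)).
rewrite -[X in (_ <= X)%N](card_ord (2 * L).+1) -cardsT.
apply: leq_trans (leq_imset_card g _); apply: subset_leq_card.
apply/fintype.subsetP => k; rewrite inE => /Xx[i xi].
have i_le : `|i| <= L%:Z by apply: index_le; rewrite xi; have := ltn_ord k; lia.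
apply/imsetP; exists (inord (absz (i + L%:Z))); first by rewrite inE.
have e : (absz (i + L%:Z))%:Z - L%:Z = i by lia.
apply: val_inj; rewrite /g /= !inordK ?e ?xi; have := ltn_ord k; lia.
Qed.

Section Counting.
Variables (X : int -> bool) (x : int -> int) (n p : nat).
Hypotheses (Ex : enumerates X x) (n_gt0 : (0 < n)%N).
Hypothesis x_qper : forall i, x (i + n%:Z) = x i + p%:Z.

Lemma index_displacement_bound i : `|p%:Z * i - n%:Z * (x i - x 0)| < n%:Z * p%:Z.
Proof.
have [x_incr _] := Ex.
(* E is n-periodic, so it is bounded by its values on [0, n). *)
pose E i := p%:Z * i - n%:Z * (x i - x 0).
have E_per j : E (j + n%:Z) = E j by rewrite /E x_qper; lia.
have E_small j : 0 <= j < n%:Z -> `|E j| < n%:Z * p%:Z.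
  move=> /andP[j_ge0 j_lt].
  have : x 0 <= x j by rewrite incr_leE.
  have : x j < x 0 + p%:Z by rewrite -[x 0 + _]add0r -x_qper add0r incr_ltE.
  rewrite /E; nia.
have -> : i = (i %% n%:Z)%Z + (i %/ n%:Z)%Z * n%:Z by rewrite addrC -divz_eq.
rewrite -/(E _) periodic_addMz // E_small // modz_ge0 ?ltz_pmod //; lia.
Qed.

Lemma index_bound (N : nat) i : `|x i| <= N%:Z ->
  p%:Z * `|i| < n%:Z * (N%:Z + `|x 0| + p%:Z).
Proof.
move=> xi_le; have := index_displacement_bound i.
have : `|n%:Z * (x i - x 0)| <= n%:Z * (N%:Z + `|x 0|).
  by rewrite normrM ger0_norm // ler_wpM2l //; lia.
have -> : p%:Z * `|i| = `|p%:Z * i| by rewrite normrM ger0_norm.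
move: (p%:Z * i) (n%:Z * (x i - x 0)) => A B; lia.
Qed.

Lemma countX_period_bound (N : nat) : (0 < p)%N ->
  (countX X N <= 2 * (n * (N + (absz (x 0) + p)) %/ p) + 1)%N.
Proof.
move=> p_gt0; rewrite addn1; apply: countX_le_index_range Ex _ => i /index_bound.
have -> : `|i| = (absz i)%:Z by rewrite abszE.
rewrite -[`|x 0|]/((absz (x 0))%:Z) => bound; rewrite lez_nat leq_divRL //; lia.
Qed.

End Counting.

Lemma limn_esup_le_of_bound (R : realType) (u : R^nat) (q C : R) :
  (forall N, u N <= q + C / N.+1%:R) -> (limn_esup (fun N => (u N)%:E) <= q%:E)%E.
Proof.
move=> u_le; rewrite limn_esup_lim; apply/lee_addgt0Pr => e e_gt0.
have C_ge0 : 0 <= `|C| / e by rewrite divr_ge0 // ltW.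
apply: lime_le; first exact: is_cvg_esups.
exists (Num.bound (`|C| / e)) => // N /= N_ge.
apply: ge_ereal_sup => _ [k /= Nk <-]; rewrite lee_fin.
have k_large : `|C| / e < k.+1%:R.
  apply: lt_le_trans (archi_boundP C_ge0) _; rewrite ler_nat.
  by apply: leq_trans (leq_trans N_ge Nk) _.
rewrite ltr_pdivrMr // -ltr_pdivrMl ?ltr0n // in k_large.
apply: le_trans (u_le k) _; rewrite lerD2l.
apply: le_trans (ltW k_large); rewrite mulrC ler_wpM2l ?invr_ge0 ?ler0n //.
exact: ler_norm.
Qed.

Lemma density_le_ratio (R : realType) (X : int -> bool) (n p K : nat) : (0 < p)%N ->
  (forall N, countX X N <= 2 * (n * (N + K) %/ p) + 1)%N ->
  (density R X <= (n%:R / p%:R : R)%:E)%E.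
Proof.
move=> p_gt0 count_le; set q : R := n%:R / p%:R; set C : R := 2 * q * K%:R + 1.
have q_ge0 : 0 <= q by rewrite divr_ge0.
have C_ge0 : 0 <= C by rewrite addr_ge0 ?mulr_ge0.
apply: (limn_esup_le_of_bound (C := C)) => N.
have L_le : (n * (N + K) %/ p)%:R <= q * (N%:R + K%:R) :> R.
  have := leq_divM (n * (N + K)) p; rewrite -(ler_nat R) !natrM natrD.
  by rewrite -ler_pdivlMr ?ltr0n // /q mulrAC.
have count_le' : (countX X N)%:R <= q * (2 * N).+1%:R + C.
  apply: (@le_trans _ _ (2 * (n * (N + K) %/ p)%:R + 1)).
    by have := count_le N; rewrite -(ler_nat R) natrD natrM.
  rewrite -[(2 * N).+1%:R]natr1 natrM /C; have := ler0n R N; nra.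
apply: (@le_trans _ _ (q + C / (2 * N).+1%:R)).
  by rewrite ler_pdivrMr ?ltr0n // mulrDl divfK ?pnatr_eq0.
rewrite lerD2l ler_wpM2l // lef_pV2 ?posrE ?ltr0n // ler_nat; lia.
Qed.

Theorem lemma21 (R : realType) (S : seq nat) (a b t c : nat)
  (X : int -> bool) (x : int -> int)
  (d : int -> int -> int) (m : nat) (d' : int -> int -> int) (m' : nat) :
  S != [::] -> all (fun s => (0 < s)%N) S ->
  (0 < a)%N -> (0 < b)%N -> (0 < t)%N ->
  independent S X -> periodic_set X -> enumerates X x ->
  block_rule_local x d m ->
  frame_rule_local x t d' m' ->
  (forall j : int, c%:Z <= nuprime a b t x d m d' m' j) ->
  (density R X <= ((a * t)%:R / (b * t + c)%:R : R)%:E)%E.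
Proof.
move=> _ _ _ b_gt0 t_gt0 _ [p [p_gt0 X_per]] Ex d_loc d'_loc nu_ge.
have [n n_gt0 x_qper] := enumerates_index_period Ex p_gt0 X_per.
have charge_le := period_charge_bound x_qper d_loc d'_loc nu_ge.
have count_le N := countX_period_bound Ex n_gt0 x_qper N p_gt0.
apply: le_trans (density_le_ratio R p_gt0 count_le) _.
rewrite lee_fin ler_pdivrMr ?ltr0n // mulrAC ler_pdivlMr; last by rewrite ltr0n; lia.
by rewrite -!natrM ler_nat; lia.
Qed.
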